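(* Let $k=\mathbb{F}_q$ with $q=2^m\geq 4$ and let $n\geq 1$. Then every element of $\mathrm{PGL}_{n+1}(k)$ induces an even permutation of $\mathbb{P}^n(k)$. *)

From mathcomp Require Import all_boot all_order all_algebra all_fingroup.
Set Implicit Arguments. Unset Strict Implicit. Unset Printing Implicit Defensive.
Import GRing.Theory.
Local Open Scope ring_scope.

(* Projective space P^n(k) over a finite field k: the set of 1-dimensional
   subspaces (lines through 0) of k^(n+1), represented as row vectors. *)
Section Proj.
Variables (k : finFieldType) (n : nat).

Definition line_of (v : 'rV[k]_n.+1) : {set 'rV[k]_n.+1} := [set c *: v | c : k].

Definition is_proj_point (L : {set 'rV[k]_n.+1}) : bool :=
  [exists v : 'rV[k]_n.+1, (v != 0) && (L == line_of v)].

Definition proj_space : finType := {L : {set 'rV[k]_n.+1} | is_proj_point L}.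

(* The (set-theoretic) image of a line under the linear map u |-> u *m A
   (row-vector convention); for A invertible this is again a line. *)
Definition mx_line_image (A : 'M[k]_n.+1) (L : {set 'rV[k]_n.+1})
  : {set 'rV[k]_n.+1} := [set u *m A | u in L].
End Proj.

From mathcomp Require Import all_boot all_order all_algebra all_fingroup all_field.
Set Implicit Arguments. Unset Strict Implicit. Unset Printing Implicit Defensive.
Import GRing.Theory.
Local Open Scope ring_scope.

(* A |-> (L |-> L A) is a homomorphism from GL_{n+1}(k) to the permutations of
   P^n(k), so the parity of the induced permutation is a homomorphism chi from
   GL_{n+1}(k) to Z/2.  Column reduction writes every invertible matrix as a
   product of transvections T(b) = 1 + e_i b (b_i = 0) and invertible diagonal
   matrices, so it suffices that chi kills these.  An invertible diagonal matrix
   D satisfies D^(q-1) = 1 with q - 1 odd, hence chi D = 0.  Conjugating T(b) by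
   the diagonal matrix with lam in position i gives T(lam b) = T(b) T((lam-1) b),
   hence chi T((lam-1) b) = 0 for every b; as q >= 3 we may take lam <> 0, 1. *)

Section ColumnReduction.
Variables (F : fieldType) (n : nat).
Local Notation M := 'M[F]_n.+1.
Local Notation V := 'rV[F]_n.+1.

Definition transvection (i : 'I_n.+1) (b : V) : M :=
  1%:M + delta_mx i 0 *m b.

Lemma mulmx_transvectionE (B : M) i (b : V) x y :
  (B *m transvection i b) x y = B x y + B x i * b 0 y.
Proof. by rewrite mulmxDr mulmx1 mulmxA -colE !mxE big_ord1 !mxE. Qed.

Lemma transvectionD i (b c : V) : b 0 i = 0 ->
  transvection i b *m transvection i c = transvection i (b + c).
Proof.
move=> bi0; have ba : b *m delta_mx i (0 : 'I_1) = 0.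
  by rewrite -colE; apply/matrixP => x y; rewrite !ord1 !mxE.
rewrite /transvection mulmxDr mulmx1 mulmxDl mul1mx -mulmxA (mulmxA b) ba.
by rewrite mul0mx mulmx0 addr0 mulmxDr addrA.
Qed.

Lemma transvection_unitmx i (b : V) : b 0 i = 0 -> transvection i b \in unitmx.
Proof.
move=> bi0; have inv : transvection i b *m transvection i (- b) = 1%:M.
  by rewrite transvectionD // subrr /transvection mulmx0 addr0.
by case/mulmx1_unit: inv.
Qed.

Lemma diag_mx_unitmx (d : V) : (forall j, d 0 j != 0) -> diag_mx d \in unitmx.
Proof. by move=> d0; rewrite unitmxE det_diag unitfE; apply/prodf_neq0. Qed.

Lemma diag_mx_transvection (d : V) i (b : V) : b *m diag_mx d = b ->
  diag_mx d *m transvection i b = transvection i (d 0 i *: b) *m diag_mx d.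
Proof.
move=> bd; have da : diag_mx d *m delta_mx i (0 : 'I_1) = d 0 i *: delta_mx i 0.
  apply/matrixP => x y; rewrite mul_diag_mx !mxE.
  by case: eqP => [->|]; rewrite ?mulr1 ?mulr0.
rewrite /transvection mulmxDr mulmxDl mulmx1 mul1mx mulmxA da -mulmxA.
by rewrite -[_ *: b *m _]scalemxAl bd -scalemxAr scalemxAl.
Qed.

Inductive col_reduces (A : M) : M -> Prop :=
  | col_reduces_refl : col_reduces A A
  | col_reduces_diag B (d : V) : col_reduces A B -> (forall j, d 0 j != 0) ->
      col_reduces A (B *m diag_mx d)
  | col_reduces_transvection B i (b : V) : col_reduces A B -> b 0 i = 0 ->
      col_reduces A (B *m transvection i b).

Lemma col_reduces_trans A B C :
  col_reduces A B -> col_reduces B C -> col_reduces A C.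
Proof. by move=> AB; elim=> [|C' d|C' i b] // _ AC'; constructor. Qed.

Lemma col_reduces_unitmx A B : col_reduces A B -> A \in unitmx -> B \in unitmx.
Proof.
move=> + uA; elim=> // [C d|C i b] _ uC ?; rewrite unitmx_mul uC.
  exact: diag_mx_unitmx.
exact: transvection_unitmx.
Qed.

Lemma mul_mx_pid_mxE m (X : 'M[F]_(m, n.+1)) r i j :
  (X *m pid_mx r) i j = X i j *+ (j < r).
Proof.
rewrite mxE (bigD1 j) //= big1 => [|l /negPf jl].
  by rewrite !mxE eqxx addr0 /= mulr_natr.
by rewrite !mxE (val_eqE l j) jl mulr0.
Qed.

Lemma pid_mx_transvection (r : nat) (i : 'I_n.+1) (b : V) : (r <= i)%N ->
  pid_mx r *m transvection i b = pid_mx r :> M.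
Proof.
move=> ri; rewrite /transvection mulmxDr mulmx1 mulmxA -colE.
have -> : col i (pid_mx r : M) = 0.
  by apply/matrixP => x y; rewrite !mxE; case: eqP => // ->; rewrite ltnNge ri andbF.
by rewrite mul0mx addr0.
Qed.

Lemma pid_mx_diag (r : nat) (d : V) : (forall j : 'I_n.+1, (j < r)%N -> d 0 j = 1) ->
  pid_mx r *m diag_mx d = pid_mx r :> M.
Proof.
move=> d1; apply/matrixP => x y; rewrite mul_mx_diag !mxE.
case: (ltnP y r) => [/d1 -> | ry]; first by rewrite mulr1.
by case: eqP => [->|]; rewrite ?ltnNge ?ry /= mul0r.
Qed.

Lemma pid_mxS (K : 'I_n.+1) (B : M) :
  pid_mx K *m B = pid_mx K :> M -> row K B = delta_mx 0 K ->
  pid_mx K.+1 *m B = pid_mx K.+1 :> M.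
Proof.
move=> idB rowB.
have -> : pid_mx K.+1 = pid_mx K + delta_mx K K :> M.
  apply/matrixP => x y; rewrite !mxE ltnS leq_eqVlt -[x == K]val_eqE.
  case: ltngtP => [_|_|/val_inj ->]; rewrite ?andbF ?andbT ?addr0 //.
  by rewrite val_eqE eq_sym add0r.
by rewrite mulmxDl idB -(mul_delta_mx (0 : 'I_1)) -mulmxA -rowE rowB.
Qed.

Lemma pivot_exists (K : 'I_n.+1) (B : M) :
  B \in unitmx -> pid_mx K *m B = pid_mx K :> M ->
  exists2 j : 'I_n.+1, (K <= j)%N & B K j != 0.
Proof.
move=> uB idB; apply/exists_inP; apply: contraT => /exists_inPn no_pivot.
(* Otherwise row K of B is a combination of its first K rows e_0, ..., e_(K-1). *)
have rowK : row K B *m pid_mx K = row K B.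
  apply/rowP => j; rewrite mul_mx_pid_mxE mxE.
  by case: ltnP => // /no_pivot; rewrite negbK => /eqP ->; rewrite mul0rn.
set u := delta_mx 0 K - row K B *m pid_mx K.
have uB0 : u *m B = 0 by rewrite mulmxBl -mulmxA idB rowK -rowE subrr.
have /rowP/(_ K)/eqP : u = 0 by rewrite -(mulmxK uB u) uB0 mul0mx.
by rewrite mxE [X in _ + X]mxE mul_mx_pid_mxE !mxE ltnn mulr0n !eqxx subr0 oner_eq0.
Qed.

Lemma col_reduces_pivot (K j : 'I_n.+1) (B : M) :
  pid_mx K *m B = pid_mx K :> M -> (K <= j)%N -> B K j != 0 ->
  exists C, [/\ col_reduces B C, pid_mx K *m C = pid_mx K :> M & C K K != 0].
Proof.
move=> idB Kj Bj; have [BK0 | BK] := eqVneq (B K K) 0; last first.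
  by exists B; split => //; constructor.
have jK : j != K by apply: contraTneq Bj => ->; rewrite BK0 eqxx.
exists (B *m transvection j (delta_mx 0 K)); split.
- by apply: col_reduces_transvection; [constructor | rewrite mxE (negPf jK) andbF].
- by rewrite mulmxA idB pid_mx_transvection.
- by rewrite mulmx_transvectionE BK0 !mxE !eqxx mulr1 add0r.
Qed.

Lemma col_reduces_row (K : 'I_n.+1) (B : M) :
  pid_mx K *m B = pid_mx K :> M -> B K K != 0 ->
  exists C, [/\ col_reduces B C, pid_mx K *m C = pid_mx K :> M & row K C = delta_mx 0 K].
Proof.
move=> idB BK.
pose b : V := \row_y (if y == K then 0 else - (B K y / B K K)).
pose d : V := \row_y (if y == K then (B K K)^-1 else 1).
exists (B *m transvection K b *m diag_mx d); split.
- apply: col_reduces_diag => [|y].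
    by apply: col_reduces_transvection; [constructor | rewrite mxE eqxx].
  by rewrite mxE; case: ifP => _; rewrite ?invr_eq0 ?oner_eq0.
- rewrite !mulmxA idB pid_mx_transvection // pid_mx_diag // => y yK.
  by rewrite mxE ifN //; apply: contraTneq yK => ->; rewrite ltnn.
- apply/rowP => y; rewrite mxE mul_mx_diag mxE mulmx_transvectionE !mxE.
  case: eqP => [->|_]; first by rewrite mulr0 addr0 mulfV.
  by rewrite mulrN mulrCA mulfV // !mulr1 subrr andbF.
Qed.

Lemma col_reduces_step (K : 'I_n.+1) (B : M) :
  B \in unitmx -> pid_mx K *m B = pid_mx K :> M ->
  exists C, col_reduces B C /\ pid_mx K.+1 *m C = pid_mx K.+1 :> M.
Proof.
move=> uB idB; have [j Kj Bj] := pivot_exists uB idB.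
have [C [BC idC CK]] := col_reduces_pivot idB Kj Bj.
have [D [CD idD rowD]] := col_reduces_row idC CK.
by exists D; split; [apply: col_reduces_trans CD | apply: pid_mxS].
Qed.

Lemma col_reduces_pid_mx (r : nat) (A : M) : (r <= n.+1)%N -> A \in unitmx ->
  exists B, col_reduces A B /\ pid_mx r *m B = pid_mx r :> M.
Proof.
move=> + uA; elim: r => [_|r IH lt_r].
  by exists A; split; [constructor | rewrite pid_mx_0 mul0mx].
have [B [AB idB]] := IH (ltnW lt_r).
have [C [BC idC]] := col_reduces_step (K := Ordinal lt_r) (col_reduces_unitmx AB uA) idB.
by exists C; split; first exact: col_reduces_trans BC.
Qed.

Theorem unitmx_col_reduces1 (A : M) : A \in unitmx -> col_reduces A 1%:M.
Proof.
move=> uA; have [B [AB]] := col_reduces_pid_mx (leqnn n.+1) uA.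
by rewrite pid_mx_1 mul1mx => <-.
Qed.

End ColumnReduction.

Section UnitmxParity.
Variables (F : fieldType) (n : nat) (chi : 'M[F]_n.+1 -> bool).
Local Notation M := 'M[F]_n.+1.
Hypothesis chiM : {in unitmx &, {morph chi : A B / A *m B >-> A (+) B}}.

Lemma parity1 : chi 1%:M = false.
Proof. by have := chiM (unitmx1 F n.+1) (unitmx1 F n.+1); rewrite mul1mx addbb. Qed.

Lemma parity_expmx (A : M) e : A \in unitmx -> chi (A ^+ e) = odd e && chi A.
Proof.
move=> uA; elim: e => [|e IH]; first by rewrite expr0 parity1.
rewrite exprS -mulmxE chiM ?unitrX // IH /=.
by case: (chi A); case: (odd e).
Qed.

Lemma parity_odd_order (A : M) e :
  A \in unitmx -> A ^+ e = 1 -> odd e -> chi A = false.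
Proof.
by move=> uA Ae1 odd_e; have := parity_expmx e uA; rewrite Ae1 odd_e parity1.
Qed.

Variable lam : F.
Hypotheses (lam0 : lam != 0) (lam1 : lam != 1).

Lemma parity_transvection i (b : 'rV[F]_n.+1) :
  b 0 i = 0 -> chi (transvection i b) = false.
Proof.
move=> bi0; pose T c := transvection i (c *: b).
have T_unit c : T c \in unitmx by apply: transvection_unitmx; rewrite mxE bi0 mulr0.
have T_conj c : chi (T (lam * c)) = chi (T c).
  pose d : 'rV[F]_n.+1 := \row_j (if j == i then lam else 1).
  have d0 j : d 0 j != 0 by rewrite mxE; case: ifP => _; rewrite ?oner_eq0.
  have bd : (c *: b) *m diag_mx d = c *: b.
    apply/rowP => j; rewrite mul_mx_diag !mxE.
    by case: eqP => [->|_]; rewrite ?bi0 ?mulr0 ?mul0r ?mulr1.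
  have := congr1 chi (diag_mx_transvection i bd).
  rewrite mxE eqxx scalerA !chiM ?diag_mx_unitmx ?T_unit // addbC.
  by move/addIb.
have T_split c : T c *m T ((lam - 1) * c) = T (lam * c).
  by rewrite transvectionD ?mxE ?bi0 ?mulr0 // -scalerDl mulrBl mul1r addrC subrK.
have := T_conj (lam - 1)^-1; rewrite -T_split chiM // mulrV ?unitfE ?subr_eq0 //.
by rewrite -[X in _ = X]addbF => /addbI; rewrite /T scale1r.
Qed.

Hypothesis chi_diag :
  forall d : 'rV[F]_n.+1, (forall j, d 0 j != 0) -> chi (diag_mx d) = false.

Lemma parity_col_reduces (A B : M) :
  A \in unitmx -> col_reduces A B -> chi B = chi A.
Proof.
move=> uA; elim=> // [C d|C i b] AC IH Hd; have uC := col_reduces_unitmx AC uA.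
  by rewrite chiM ?diag_mx_unitmx // chi_diag // addbF.
by rewrite chiM ?transvection_unitmx // parity_transvection // addbF.
Qed.

Theorem parity_unitmx (A : M) : A \in unitmx -> chi A = false.
Proof.
by move=> uA; rewrite -(parity_col_reduces uA (unitmx_col_reduces1 uA)) parity1.
Qed.

End UnitmxParity.

Lemma diag_mxX (R : pzRingType) n (d : 'rV[R]_n.+1) e :
  diag_mx d ^+ e = diag_mx (map_mx (fun x : R => x ^+ e) d).
Proof.
elim: e => [|e IH].
  rewrite expr0 -[LHS]/(1%:M) -diag_const_mx.
  by congr diag_mx; apply/rowP => j; rewrite !mxE.
rewrite exprS IH -mulmxE mulmx_diag.
by congr diag_mx; apply/rowP => j; rewrite !mxE exprS.
Qed.

Lemma diag_mx_expf_card (F : finFieldType) n (d : 'rV[F]_n.+1) :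
  (forall j, d 0 j != 0) -> diag_mx d ^+ #|F|.-1 = 1.
Proof.
move=> d0; rewrite diag_mxX -[RHS]/(1%:M) -diag_const_mx; congr diag_mx; apply/rowP => j.
rewrite !mxE; apply: (mulfI (d0 j)).
by rewrite -exprS (ltn_predK (finNzRing_gt1 F)) expf_card mulr1.
Qed.

Section ProjectiveAction.
Variables (k : finFieldType) (n : nat).
Local Notation P := (proj_space k n).
Local Notation M := 'M[k]_n.+1.

Lemma mx_line_image_line (A : M) v : mx_line_image A (line_of v) = line_of (v *m A).
Proof.
rewrite /mx_line_image /line_of -imset_comp; apply: eq_imset => c /=.
by rewrite scalemxAl.
Qed.

Lemma mx_line_imageM (A B : M) L :
  mx_line_image (A *m B) L = mx_line_image B (mx_line_image A L).
Proof.
by rewrite /mx_line_image -imset_comp; apply: eq_imset => u /=; rewrite mulmxA.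
Qed.

Lemma mx_line_image1 L : mx_line_image (1%:M : M) L = L.
Proof.
by rewrite /mx_line_image (eq_imset (g := id)) ?imset_id // => u; rewrite mulmx1.
Qed.

Lemma proj_point_image (A : M) (L : P) :
  A \in unitmx -> is_proj_point (mx_line_image A (val L)).
Proof.
move=> uA; case: L => L /= /existsP [v /andP [v0 /eqP ->]].
apply/existsP; exists (v *m A); rewrite mx_line_image_line eqxx andbT.
by apply: contra v0 => /eqP vA0; rewrite -(mulmxK uA v) vA0 mul0mx.
Qed.

Definition proj_map (A : M) (L : P) : P := insubd L (mx_line_image A (val L)).

Lemma proj_mapE (A : M) L :
  A \in unitmx -> val (proj_map A L) = mx_line_image A (val L).
Proof. by move=> uA; rewrite insubdK //; apply: proj_point_image. Qed.

Lemma proj_mapK (A : M) : A \in unitmx -> cancel (proj_map A) (proj_map (invmx A)).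
Proof.
move=> uA L; apply: val_inj.
by rewrite !proj_mapE ?unitmx_inv // -mx_line_imageM mulmxV // mx_line_image1.
Qed.

(* Singular matrices are sent to the identity permutation. *)
Definition unitmx_part (A : M) : M := if A \in unitmx then A else 1%:M.

Lemma unitmx_part_unitmx (A : M) : unitmx_part A \in unitmx.
Proof. by rewrite /unitmx_part; case: ifP => // _; apply: unitmx1. Qed.

Definition proj_perm (A : M) : {perm P} :=
  perm (can_inj (proj_mapK (unitmx_part_unitmx A))).

Lemma proj_permE (A : M) L :
  A \in unitmx -> val (proj_perm A L) = mx_line_image A (val L).
Proof. by move=> uA; rewrite permE /unitmx_part uA proj_mapE. Qed.

Lemma proj_permM (A B : M) : A \in unitmx -> B \in unitmx ->
  proj_perm (A *m B) = (proj_perm A * proj_perm B)%g.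
Proof.
move=> uA uB; apply/permP => L; apply: val_inj.
by rewrite permM !proj_permE ?unitmx_mul ?uA // mx_line_imageM.
Qed.

Lemma odd_proj_permM :
  {in unitmx &, {morph (fun A => odd_perm (proj_perm A)) : A B / A *m B >-> A (+) B}}.
Proof. by move=> A B uA uB /=; rewrite proj_permM // odd_permM. Qed.

End ProjectiveAction.

Theorem proposition3p5 (k : finFieldType) (m n : nat)
  (hq : #|k| = (2 ^ m)%N) (hq4 : (4 <= #|k|)%N) (hn : (1 <= n)%N)
  (A : 'M[k]_n.+1) (hA : A \in unitmx) :
  exists s : {perm proj_space k n},
    (forall L : proj_space k n, val (s L) = mx_line_image A (val L))
    /\ ~~ odd_perm s.
Proof.
exists (proj_perm A); split=> [L|]; first exact: proj_permE.
have odd_q1 : odd #|k|.-1.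
  have m0 : m != 0%N by apply: contraTneq hq4 => m0; rewrite hq m0.
  by have := congr1 odd (ltn_predK hq4); rewrite /= hq oddX (negbTE m0) => /negbFE.
have [lam lam0 lam1] : exists2 lam : k, lam != 0 & lam != 1.
  have : [set 0; 1] \proper [set: k].
    by rewrite properEcard subsetT cards2 cardsT eq_sym oner_neq0 (leq_trans _ hq4).
  by case/properP => _ [x _]; rewrite !inE negb_or => /andP[]; exists x.
have chiM := @odd_proj_permM k n.
apply/negbT; apply: (parity_unitmx chiM lam0 lam1 _ hA) => d d0.
exact: parity_odd_order chiM _ _ (diag_mx_unitmx d0) (diag_mx_expf_card d0) odd_q1.
Qed.
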